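(* Let $\alpha<1$ be a real number. Let $P_1$ be a set of primes with $P_1(X)\ge c\frac{\sqrt{X}}{(\log X)^{\alpha}}$ for all sufficiently large real $X$, where $c>0$ is a constant. Then for any integer $k\ge 2$, $$P_1^k(X)\ge c_1\sqrt{X}(\log X)^{k-1-k\alpha}$$ for all sufficiently large $X$, where $c_1>0$ is a constant depending only on $c$ and $k$.
   Context: $P_1^1=P_1$, $P_1^k=P_1P_1^{k-1}$ where $AB=\{ab:a\in A,b\in B\}$; for $S\subset\mathbb{N}_0$, $S(X)=|S\cap[1,X]|$. *)

From Stdlib Require Import Reals ZArith Znumtheory ClassicalDescription.
Open Scope R_scope.

Fixpoint count_upto (P : nat -> Prop) (N : nat) : nat :=
  match N with
  | O => O
  | S m => (count_upto P m +
            (if excluded_middle_informative (P (S m)) then 1 else 0))%nat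
  end.

(* S(X) = |S ∩ [1, X]| for real X (for X < 1 this is 0). *)
Definition counting (P : nat -> Prop) (X : R) : nat :=
  count_upto P (Z.to_nat (Int_part X)).

Definition setmul (A B : nat -> Prop) : nat -> Prop :=
  fun n => exists a b, A a /\ B b /\ n = (a * b)%nat.

(* P^1 = P, P^k = P P^{k-1}; P^0 := {1} (unused). *)
Fixpoint setpow (P : nat -> Prop) (k : nat) : nat -> Prop :=
  match k with
  | O => fun n => n = 1%nat
  | S O => P
  | S k' => setmul P (setpow P k')
  end.

Definition is_prime_nat (p : nat) : Prop := prime (Z.of_nat p).

From Stdlib Require Import Reals Lra Lia Psatz ZArith Znumtheory ClassicalDescription List.
Open Scope R_scope.

(* Induction on k, carrying the bound in the form S(N) >= C sqrt N (ln N)^g.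
   Partial summation turns P(N) >= C sqrt N (ln N)^g into
   sum_{p <= M, p in P} p^(-1/2) >> (ln M)^(g+1).  If Q consists of products of
   k primes and Q(N) >> sqrt N (ln N)^h, count the pairs (p, m) in P x Q with
   p m <= N: every n in PQ arises from at most k+1 of them (p is one of its prime
   factors), so (k+1) (PQ)(N) >= sum_{p <= sqrt N} Q(N/p)
   >> sqrt N (ln N)^h sum_{p <= sqrt N} p^(-1/2) >> sqrt N (ln N)^(h+g+1).
   Replacing (ln x)^g by (ln y)^g for y <= x <= y^4 only costs the factor
   4^|g| = Kpow g. *)

Fixpoint sumR (f : nat -> R) (n : nat) : R :=
  match n with O => 0 | S m => sumR f m + f m end.

Lemma sumR_ext f g n : (forall i, (i < n)%nat -> f i = g i) -> sumR f n = sumR g n.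
Proof.
  induction n as [|n IH]; intros H; simpl; [reflexivity|].
  rewrite IH by (intros; apply H; lia). rewrite H by lia. reflexivity.
Qed.

Lemma sumR_le f g n : (forall i, (i < n)%nat -> f i <= g i) -> sumR f n <= sumR g n.
Proof.
  induction n as [|n IH]; intros H; simpl; [lra|].
  assert (sumR f n <= sumR g n) by (apply IH; intros; apply H; lia).
  assert (f n <= g n) by (apply H; lia). lra.
Qed.

Lemma sumR_const0 n : sumR (fun _ => 0) n = 0.
Proof. induction n as [|n IH]; simpl; [|rewrite IH]; lra. Qed.

Lemma sumR_zero f n : (forall i, (i < n)%nat -> f i = 0) -> sumR f n = 0.
Proof. intros H. rewrite (sumR_ext f (fun _ => 0)) by exact H. apply sumR_const0. Qed.

Lemma sumR_nonneg f n : (forall i, (i < n)%nat -> 0 <= f i) -> 0 <= sumR f n.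
Proof. intros H. rewrite <- (sumR_const0 n). now apply sumR_le. Qed.

Lemma sumR_plus f g n : sumR (fun i => f i + g i) n = sumR f n + sumR g n.
Proof. induction n as [|n IH]; simpl; [|rewrite IH]; lra. Qed.

Lemma sumR_scal c f n : sumR (fun i => c * f i) n = c * sumR f n.
Proof. induction n as [|n IH]; simpl; [|rewrite IH]; lra. Qed.

Lemma sumR_swap (F : nat -> nat -> R) n m :
  sumR (fun i => sumR (fun j => F i j) m) n = sumR (fun j => sumR (fun i => F i j) n) m.
Proof.
  induction n as [|n IH]; simpl.
  - symmetry; apply sumR_const0.
  - rewrite IH, <- sumR_plus. reflexivity.
Qed.

Lemma sumR_split f a b : sumR f (a + b) = sumR f a + sumR (fun j => f (a + j)%nat) b.
Proof.
  induction b as [|b IH]; simpl.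
  - rewrite Nat.add_0_r; lra.
  - rewrite Nat.add_succ_r; simpl. rewrite IH; lra.
Qed.

Lemma sumR_le_tail f a b : (forall i, (i < b)%nat -> 0 <= f i) -> (a <= b)%nat ->
  sumR (fun j => f (a + j)%nat) (b - a) <= sumR f b.
Proof.
  intros H Hab. replace b with (a + (b - a))%nat at 2 by lia. rewrite sumR_split.
  assert (0 <= sumR f a) by (apply sumR_nonneg; intros; apply H; lia). lra.
Qed.

Lemma sumR_le_range f a b : (forall i, (i < b)%nat -> 0 <= f i) -> (a <= b)%nat ->
  sumR f a <= sumR f b.
Proof.
  intros H Hab. replace b with (a + (b - a))%nat by lia. rewrite sumR_split.
  assert (0 <= sumR (fun j => f (a + j)%nat) (b - a)) by (apply sumR_nonneg; intros; apply H; lia).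
  lra.
Qed.

Lemma sumR_ge_term f n i : (forall j, (j < n)%nat -> 0 <= f j) -> (i < n)%nat -> f i <= sumR f n.
Proof.
  intros H Hi. apply Rle_trans with (sumR f (S i)).
  - simpl. assert (0 <= sumR f i) by (apply sumR_nonneg; intros; apply H; lia). lra.
  - apply sumR_le_range; [exact H | lia].
Qed.

Definition ind (A : Prop) : R := if excluded_middle_informative A then 1 else 0.

Lemma ind_nonneg A : 0 <= ind A.
Proof. unfold ind; destruct excluded_middle_informative; lra. Qed.

Lemma ind_true (A : Prop) : A -> ind A = 1.
Proof. unfold ind; destruct excluded_middle_informative; tauto. Qed.

Lemma ind_false (A : Prop) : ~ A -> ind A = 0.
Proof. unfold ind; destruct excluded_middle_informative; tauto. Qed.

Lemma ind_le_sumR (A : Prop) (B : nat -> Prop) n :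
  (A -> exists i, (i < n)%nat /\ B i) -> ind A <= sumR (fun i => ind (B i)) n.
Proof.
  intros H. destruct (excluded_middle_informative A) as [HA|HA].
  - destruct (H HA) as [i [Hi HB]]. rewrite ind_true by exact HA.
    rewrite <- (ind_true _ HB). apply (sumR_ge_term (fun j => ind (B j))); [intros; apply ind_nonneg | exact Hi].
  - rewrite ind_false by exact HA. apply sumR_nonneg; intros; apply ind_nonneg.
Qed.

Lemma sumR_ind_le1 (B : nat -> Prop) n :
  (forall i j, B i -> B j -> i = j) -> sumR (fun i => ind (B i)) n <= 1.
Proof.
  intros Huniq. induction n as [|n IH]; simpl; [lra|].
  destruct (excluded_middle_informative (B n)) as [Hn|Hn].
  - rewrite ind_true by exact Hn.
    rewrite sumR_zero; [lra|].
    intros i Hi. apply ind_false. intros Bi. specialize (Huniq i n Bi Hn). lia.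
  - rewrite ind_false by exact Hn. lra.
Qed.

Lemma sumR_ind_In_le_length (g : nat -> nat) (l : list nat) n :
  (forall i j, g i = g j -> i = j) ->
  sumR (fun i => ind (In (g i) l)) n <= INR (length l).
Proof.
  intros Hg. induction l as [|a l IH]; cbn [In length].
  - rewrite sumR_zero; [simpl; lra|]. intros; apply ind_false; auto.
  - rewrite S_INR.
    apply Rle_trans with (sumR (fun i => ind (g i = a) + ind (In (g i) l)) n).
    + apply sumR_le; intros i _. unfold ind.
      repeat destruct excluded_middle_informative; try lra; exfalso; intuition congruence.
    + rewrite sumR_plus.
      assert (sumR (fun i => ind (g i = a)) n <= 1)
        by (apply sumR_ind_le1; intros i j Hi Hj; apply Hg; congruence).
      lra.
Qed.

Lemma count_upto_sumR P N : INR (count_upto P N) = sumR (fun i => ind (P (S i))) N.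
Proof.
  induction N as [|N IH]; simpl; [reflexivity|].
  rewrite plus_INR, IH. unfold ind. destruct excluded_middle_informative; simpl; lra.
Qed.

Lemma count_upto_S P N :
  INR (count_upto P (S N)) = INR (count_upto P N) + ind (P (S N)).
Proof. rewrite !count_upto_sumR. reflexivity. Qed.

Lemma sumR_by_parts P (f : nat -> R) M :
  sumR (fun i => ind (P (S i)) * f (S i)) M =
  INR (count_upto P M) * f (S M)
  + sumR (fun i => INR (count_upto P (S i)) * (f (S i) - f (S (S i)))) M.
Proof.
  induction M as [|M IH]; cbn [sumR]; [simpl; lra|].
  rewrite IH, count_upto_S. ring.
Qed.

Lemma ln_le x y : 0 < x -> x <= y -> ln x <= ln y.
Proof. intros Hx [H|<-]; [left; now apply ln_increasing | lra]. Qed.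

Lemma ln_pos x : 1 < x -> 0 < ln x.
Proof. intros H. rewrite <- ln_1. apply ln_increasing; lra. Qed.

Lemma exp_le x y : x <= y -> exp x <= exp y.
Proof. intros [H|<-]; [left; now apply exp_increasing | lra]. Qed.

Definition Kpow (g : R) : R := Rpower 4 (Rabs g).

Lemma Kpow_pos g : 0 < Kpow g.
Proof. apply exp_pos. Qed.

Lemma Rpower_ln_comparable g x y : 1 < y -> y <= x -> x <= y ^ 4 ->
  Rpower (ln x) g <= Kpow g * Rpower (ln y) g /\
  Rpower (ln y) g <= Kpow g * Rpower (ln x) g.
Proof.
  intros Hy Hyx Hxy.
  assert (Hly : 0 < ln y) by now apply ln_pos.
  assert (Hlyx : ln y <= ln x) by (apply ln_le; lra).
  assert (Hlxy : ln x <= 4 * ln y).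
  { replace (4 * ln y) with (ln (y ^ 4)) by (rewrite ln_pow by lra; simpl; ring).
    apply ln_le; lra. }
  assert (Hl4 : 0 < ln 4) by (apply ln_pos; lra).
  assert (Hu0 : ln (ln y) <= ln (ln x)) by (apply ln_le; lra).
  assert (Hu4 : ln (ln x) <= ln 4 + ln (ln y)).
  { rewrite <- ln_mult by lra. apply ln_le; lra. }
  unfold Kpow, Rpower. rewrite <- !exp_plus.
  split; apply exp_le; destruct (Rle_dec 0 g);
    [rewrite Rabs_right | rewrite Rabs_left | rewrite Rabs_right | rewrite Rabs_left];
    nra.
Qed.

Lemma ln_le_sum_inv x0 b : 0 < x0 ->
  ln (x0 + INR b) - ln x0 <= sumR (fun j => / (x0 + INR j)) b.
Proof.
  intros Hx0. induction b as [|b IH]; simpl sumR.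
  - rewrite Rplus_0_r; lra.
  - assert (Hb : 0 < x0 + INR b) by (pose proof (pos_INR b); lra).
    assert (ln (x0 + INR (S b)) - ln (x0 + INR b) <= / (x0 + INR b)).
    { replace (x0 + INR (S b)) with ((x0 + INR b) * (1 + / (x0 + INR b)))
        by (rewrite S_INR; field; lra).
      assert (0 < / (x0 + INR b)) by now apply Rinv_0_lt_compat.
      rewrite ln_mult by lra.
      assert (ln (1 + / (x0 + INR b)) <= / (x0 + INR b)).
      { rewrite <- (ln_exp (/ (x0 + INR b))) at 2. apply ln_le; [lra | apply exp_ineq1_le]. }
      lra. }
    lra.
Qed.

Lemma inv_sqrt_decrement x : 0 < x -> / (2 * sqrt x * (x + 1)) <= / sqrt x - / sqrt (x + 1).
Proof.
  intros Hx. set (s := sqrt x). set (t := sqrt (x + 1)).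
  assert (Hs : 0 < s) by (apply sqrt_lt_R0; lra).
  assert (Ht : 0 < t) by (apply sqrt_lt_R0; lra).
  assert (Hss : s * s = x) by (apply sqrt_sqrt; lra).
  assert (Htt : t * t = x + 1) by (apply sqrt_sqrt; lra).
  rewrite <- Htt.
  replace (/ s - / t) with ((t * t - s * s) / (2 * s * (t * t)) + (t - s) * (t - s) / (2 * s * (t * t)))
    by (field; lra).
  replace (t * t - s * s) with 1 by lra.
  assert (0 <= (t - s) * (t - s) / (2 * s * (t * t)))
    by (apply Rmult_le_pos; [nra | left; apply Rinv_0_lt_compat; nra]).
  unfold Rdiv. lra.
Qed.

Lemma floor_nat_bounds X : 0 <= X ->
  INR (Z.to_nat (Int_part X)) <= X < INR (Z.to_nat (Int_part X)) + 1.
Proof.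
  intros HX. destruct (base_Int_part X) as [H1 H2].
  assert (Hz : (0 <= Int_part X)%Z).
  { apply le_IZR. apply Rnot_lt_le; intro Hc. apply lt_IZR in Hc.
    assert (H : (Int_part X <= -1)%Z) by lia. apply IZR_le in H. simpl in H. lra. }
  rewrite INR_IZR_INZ, Z2Nat.id by exact Hz. lra.
Qed.

Lemma counting_INR P N : counting P (INR N) = count_upto P N.
Proof. unfold counting. now rewrite Int_part_INR, Nat2Z.id. Qed.

Definition counts_at_least (S : nat -> Prop) (C g : R) : Prop :=
  exists N0 : nat, forall N : nat, (N0 <= N)%nat ->
    C * sqrt (INR N) * Rpower (ln (INR N)) g <= INR (count_upto S N).

Lemma counts_at_least_of_counting S C g :
  (exists X0, forall X, X0 <= X -> INR (counting S X) >= C * sqrt X * Rpower (ln X) g) ->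
  counts_at_least S C g.
Proof.
  intros [X0 H]. destruct (INR_unbounded X0) as [N0 HN0].
  exists N0. intros N HN. apply le_INR in HN.
  rewrite <- counting_INR. apply Rge_le, H. lra.
Qed.

Lemma counting_of_counts_at_least S C g : 0 <= C -> counts_at_least S C g ->
  exists X0, forall X, X0 <= X ->
    INR (counting S X) >= C / (2 * Kpow g) * sqrt X * Rpower (ln X) g.
Proof.
  intros HC [N0 H]. exists (INR (Nat.max N0 2) + 1). intros X HX.
  assert (HK := Kpow_pos g).
  destruct (floor_nat_bounds X) as [HN1 HN2]; [pose proof (pos_INR (Nat.max N0 2)); lra|].
  unfold counting. set (N := Z.to_nat (Int_part X)) in *.
  assert (HN : (Nat.max N0 2 <= N)%nat) by (apply Nat.lt_le_incl, INR_lt; lra).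
  assert (HN2r : 2 <= INR N) by (apply (le_INR 2); lia).
  assert (HsX : sqrt X <= 2 * sqrt (INR N)).
  { rewrite <- (sqrt_square 2), <- sqrt_mult by lra. apply sqrt_le_1_alt. lra. }
  assert (HX4 : X <= INR N ^ 4).
  { assert (HNN : 4 <= INR N * INR N) by nra.
    replace (INR N ^ 4) with ((INR N * INR N) * (INR N * INR N)) by ring. nra. }
  destruct (Rpower_ln_comparable g X (INR N) ltac:(lra) ltac:(lra) HX4) as [HlnX _].
  apply Rle_ge. eapply Rle_trans; [|apply H; lia].
  apply Rle_trans with (C / (2 * Kpow g) * (2 * sqrt (INR N)) * (Kpow g * Rpower (ln (INR N)) g)).
  - apply Rmult_le_compat; [| left; apply exp_pos | | exact HlnX].
    + apply Rmult_le_pos; [apply Rmult_le_pos; [lra | left; apply Rinv_0_lt_compat; lra] | apply sqrt_pos].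
    + apply Rmult_le_compat_l; [apply Rmult_le_pos; [lra | left; apply Rinv_0_lt_compat; lra] | exact HsX].
  - apply Req_le. field. lra.
Qed.

Definition sum_inv_sqrt (P : nat -> Prop) (M : nat) : R :=
  sumR (fun i => ind (P (S i)) / sqrt (INR (S i))) M.

Lemma ln_div4_le_ln_gap M s : 16 <= M -> 0 <= s -> (s + 2) * (s + 2) <= 4 * M ->
  ln M / 4 <= ln (M + 2) - ln (s + 2).
Proof.
  intros HM Hs Hs2.
  assert (ln M <= ln (M + 2)) by (apply ln_le; lra).
  assert (2 * ln (s + 2) <= ln 4 + ln M).
  { replace (2 * ln (s + 2)) with (ln ((s + 2) * (s + 2))) by (rewrite ln_mult by lra; ring).
    rewrite <- ln_mult by lra. apply ln_le; nra. }
  assert (2 * ln 4 <= ln M).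
  { replace (2 * ln 4) with (ln (4 * 4)) by (rewrite ln_mult by lra; ring). apply ln_le; lra. }
  lra.
Qed.

Lemma count_decrement_lower P C g M n : 0 <= C ->
  (2 <= n)%nat -> (n <= M)%nat -> (M <= n * n)%nat ->
  C * sqrt (INR n) * Rpower (ln (INR n)) g <= INR (count_upto P n) ->
  C * Rpower (ln (INR M)) g / (2 * Kpow g) * / (INR n + 1)
  <= INR (count_upto P n) * (/ sqrt (INR n) - / sqrt (INR (S n))).
Proof.
  intros HC Hn2 HnM HMn Hcount.
  assert (Hn : 2 <= INR n) by (apply (le_INR 2); lia).
  assert (HM4 : INR M <= INR n ^ 4).
  { replace (INR n ^ 4) with (INR (n * n) * INR (n * n)) by (rewrite mult_INR; ring).
    assert (INR M <= INR (n * n)) by (apply le_INR; lia).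
    assert (1 <= INR (n * n)) by (rewrite mult_INR; nra). nra. }
  destruct (Rpower_ln_comparable g (INR M) (INR n) ltac:(lra) ltac:(apply le_INR; lia) HM4)
    as [Hln _].
  assert (HK := Kpow_pos g).
  assert (Hsn : 0 < sqrt (INR n)) by (apply sqrt_lt_R0; lra).
  assert (Hdec := inv_sqrt_decrement (INR n) ltac:(lra)).
  rewrite S_INR.
  set (rn := Rpower (ln (INR n)) g) in *.
  set (rM := Rpower (ln (INR M)) g) in *.
  apply Rle_trans with (C * sqrt (INR n) * rn * / (2 * sqrt (INR n) * (INR n + 1))).
  - replace (C * sqrt (INR n) * rn * / (2 * sqrt (INR n) * (INR n + 1)))
      with (C * rn / 2 * / (INR n + 1)) by (field; lra).
    apply Rmult_le_compat_r; [left; apply Rinv_0_lt_compat; lra|].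
    apply Rmult_le_reg_r with (2 * Kpow g); [lra|].
    replace (C * rM / (2 * Kpow g) * (2 * Kpow g)) with (C * rM) by (field; lra).
    replace (C * rn / 2 * (2 * Kpow g)) with (C * (Kpow g * rn)) by field.
    apply Rmult_le_compat_l; lra.
  - apply Rmult_le_compat; [| left; apply Rinv_0_lt_compat; nra | exact Hcount | exact Hdec].
    apply Rmult_le_pos; [apply Rmult_le_pos; [lra | lra] | left; apply exp_pos].
Qed.

Lemma inv_sqrt_step_nonneg n : 0 <= / sqrt (INR (S n)) - / sqrt (INR (S (S n))).
Proof.
  assert (Hn : 0 < INR (S n)) by (apply lt_0_INR; lia).
  rewrite (S_INR (S n)). eapply Rle_trans; [|apply (inv_sqrt_decrement _ Hn)].
  left. apply Rinv_0_lt_compat.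
  assert (0 < sqrt (INR (S n))) by (apply sqrt_lt_R0; lra). nra.
Qed.

Lemma sum_inv_sqrt_by_parts_ge P M :
  sumR (fun i => INR (count_upto P (S i)) * (/ sqrt (INR (S i)) - / sqrt (INR (S (S i))))) M
  <= sum_inv_sqrt P M.
Proof.
  unfold sum_inv_sqrt.
  change (fun i => ind (P (S i)) / sqrt (INR (S i)))
    with (fun i => ind (P (S i)) * (fun n => / sqrt (INR n)) (S i)).
  rewrite sumR_by_parts.
  assert (0 <= INR (count_upto P M) * / sqrt (INR (S M))).
  { apply Rmult_le_pos; [apply pos_INR | left; apply Rinv_0_lt_compat, sqrt_lt_R0, lt_0_INR; lia]. }
  lra.
Qed.

Lemma sum_inv_sqrt_lower P C g : 0 <= C -> counts_at_least P C g ->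
  exists M0 : nat, forall M : nat, (M0 <= M)%nat ->
    C / (8 * Kpow g) * Rpower (ln (INR M)) (g + 1) <= sum_inv_sqrt P M.
Proof.
  intros HC [N0 H]. exists (Nat.max 16 (N0 * N0)). intros M HM.
  set (s := Nat.sqrt M).
  assert (Hs1 : (s * s <= M)%nat) by (apply Nat.sqrt_le_square; lia).
  assert (Hs2 : (M < S s * S s)%nat) by (apply Nat.sqrt_lt_square; lia).
  assert (Hs0 : (N0 <= s)%nat) by (apply Nat.sqrt_le_square; lia).
  assert (Hs4 : (4 <= s)%nat) by (apply Nat.sqrt_le_square; lia).
  assert (HM16 : 16 <= INR M) by (replace 16 with (INR 16) by (simpl; lra); apply le_INR; lia).
  set (LM := ln (INR M)).
  assert (HLM : 0 < LM) by (apply ln_pos; lra).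
  assert (HK := Kpow_pos g).
  set (B := C * Rpower LM g / (2 * Kpow g)).
  assert (HB : 0 <= B).
  { apply Rmult_le_pos; [apply Rmult_le_pos; [lra | left; apply exp_pos]
                        | left; apply Rinv_0_lt_compat; lra]. }
  set (w := fun i : nat =>
         INR (count_upto P (S i)) * (/ sqrt (INR (S i)) - / sqrt (INR (S (S i))))).
  assert (Hw : forall i, 0 <= w i)
    by (intros i; apply Rmult_le_pos; [apply pos_INR | apply inv_sqrt_step_nonneg]).
  assert (Hterm : forall j, (j < M - s)%nat -> B * / (INR s + 2 + INR j) <= w (s + j)%nat).
  { intros j Hj. unfold w.
    replace (INR s + 2 + INR j) with (INR (S (s + j)) + 1) by (rewrite S_INR, plus_INR; ring).
    apply count_decrement_lower; [lra | lia | lia | nia | apply H; lia]. }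
  assert (Hgap : LM / 4 <= ln (INR s + 2 + INR (M - s)) - ln (INR s + 2)).
  { rewrite minus_INR by nia. replace (INR s + 2 + (INR M - INR s)) with (INR M + 2) by ring.
    apply ln_div4_le_ln_gap; [lra | apply pos_INR |].
    assert (HsM : INR (s * s) <= INR M) by (apply le_INR; lia).
    rewrite mult_INR in HsM. assert (4 <= INR s) by (replace 4 with (INR 4) by (simpl; lra); apply le_INR; lia).
    nra. }
  assert (Hharm := ln_le_sum_inv (INR s + 2) (M - s) ltac:(pose proof (pos_INR s); lra)).
  apply Rle_trans with (B * (LM / 4)).
  { unfold B. rewrite Rpower_plus, Rpower_1 by exact HLM. apply Req_le. field. lra. }
  apply Rle_trans with (B * sumR (fun j => / (INR s + 2 + INR j)) (M - s)).
  { apply Rmult_le_compat_l; lra. }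
  rewrite <- sumR_scal. eapply Rle_trans; [|apply sum_inv_sqrt_by_parts_ge].
  eapply Rle_trans; [apply sumR_le, Hterm|]. apply (sumR_le_tail w); [intros; apply Hw | nia].
Qed.

Definition prod_list (l : list nat) : nat := fold_right Nat.mul 1%nat l.

Definition prime_product (k m : nat) : Prop :=
  exists l, length l = k /\ (forall x, In x l -> is_prime_nat x) /\ m = prod_list l.

Lemma is_prime_nat_ge2 p : is_prime_nat p -> (2 <= p)%nat.
Proof. intros H. apply prime_ge_2 in H. lia. Qed.

Lemma In_of_prime_dvd_prod_list l p : (forall x, In x l -> is_prime_nat x) -> is_prime_nat p ->
  (Z.of_nat p | Z.of_nat (prod_list l))%Z -> In p l.
Proof.
  induction l as [|a l IH]; simpl; intros Hl Hp Hd.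
  - apply Z.divide_1_r_nonneg in Hd; [|lia]. apply is_prime_nat_ge2 in Hp. lia.
  - rewrite Nat2Z.inj_mul in Hd. apply prime_mult in Hd; [|exact Hp].
    destruct Hd as [Hd|Hd].
    + left. apply prime_div_prime in Hd; [lia | exact Hp | apply Hl; now left].
    + right. apply IH; auto.
Qed.

Lemma setpow_prime_product P k : (forall p, P p -> is_prime_nat p) ->
  forall n, setpow P (S k) n -> prime_product (S k) n.
Proof.
  intros HP. induction k as [|k IH]; intros n Hn.
  - exists (n :: nil). simpl in *. split; [reflexivity | split].
    + intros x [<-|[]]. now apply HP.
    + unfold prod_list; simpl; lia.
  - destruct Hn as [a [b [Ha [Hb ->]]]]. destruct (IH b Hb) as [l [Hlen [Hl ->]]].
    exists (a :: l). split; [simpl; lia | split; [| reflexivity]].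
    intros x [<-|Hx]; auto.
Qed.

Lemma count_quotient_sumR Q p N : (0 < p)%nat ->
  INR (count_upto Q (N / p)) = sumR (fun j => ind (Q (S j) /\ (p * S j <= N)%nat)) N.
Proof.
  intros Hp. rewrite count_upto_sumR.
  assert (Hdiv := Nat.div_mod N p ltac:(lia)). assert (Hmod := Nat.mod_upper_bound N p ltac:(lia)).
  set (h := fun j => ind (Q (S j) /\ (p * S j <= N)%nat)).
  replace N with (N / p + (N - N / p))%nat at 2 by nia. rewrite sumR_split.
  rewrite (sumR_zero (fun j => h (N / p + j)%nat)), Rplus_0_r.
  - apply sumR_ext. intros j Hj. unfold h, ind.
    repeat destruct excluded_middle_informative; try reflexivity; exfalso; intuition nia.
  - intros j _. apply ind_false. intros [_ Hj]. nia.
Qed.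

Lemma factorizations_le P Q k n N : (forall p, P p -> is_prime_nat p) ->
  (forall m, Q m -> prime_product k m) ->
  sumR (fun i => sumR (fun j => ind (P (S i) /\ Q (S j) /\ (S i * S j)%nat = n)) N) N
  <= INR (S k) * ind (setmul P Q n).
Proof.
  intros HP HQ. destruct (excluded_middle_informative (setmul P Q n)) as [Hn|Hn].
  2: { rewrite ind_false, Rmult_0_r by exact Hn. apply Req_le.
       apply sumR_zero; intros i _. apply sumR_zero; intros j _.
       apply ind_false. intros [Pi [Qj Hij]]. apply Hn. now exists (S i), (S j). }
  rewrite ind_true, Rmult_1_r by exact Hn.
  destruct Hn as [a [b [Ha [Hb ->]]]]. destruct (HQ b Hb) as [l [Hlen [Hl ->]]].
  assert (Hal : forall x, In x (a :: l) -> is_prime_nat x) by (intros x [<-|Hx]; auto).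
  replace (S k) with (length (a :: l)) by (simpl; lia).
  eapply Rle_trans; [|apply (sumR_ind_In_le_length S (a :: l) N); intros; lia].
  apply sumR_le. intros i _.
  destruct (excluded_middle_informative (In (S i) (a :: l))) as [Hin|Hin].
  - rewrite ind_true by exact Hin. apply sumR_ind_le1.
    intros j j' [_ [_ Hj]] [_ [_ Hj']]. nia.
  - rewrite ind_false by exact Hin. apply Req_le, sumR_zero. intros j _. apply ind_false.
    intros [Pi [_ Hij]]. apply Hin, In_of_prime_dvd_prod_list; [exact Hal | now apply HP |].
    exists (Z.of_nat (S j)). change (prod_list (a :: l)) with (a * prod_list l)%nat.
    rewrite <- Hij, Nat2Z.inj_mul. ring.
Qed.

Lemma sum_count_quotients_le P Q k N : (forall p, P p -> is_prime_nat p) ->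
  (forall m, Q m -> prime_product k m) ->
  sumR (fun i => ind (P (S i)) * INR (count_upto Q (N / S i))) N
  <= INR (S k) * INR (count_upto (setmul P Q) N).
Proof.
  intros HP HQ.
  set (F := fun i j l : nat => ind (P (S i) /\ Q (S j) /\ (S i * S j)%nat = S l)).
  apply Rle_trans with (sumR (fun i => sumR (fun j => sumR (F i j) N) N) N).
  { apply sumR_le. intros i _. rewrite count_quotient_sumR by lia.
    rewrite <- sumR_scal. apply sumR_le. intros j _.
    destruct (excluded_middle_informative (P (S i))) as [Pi|Pi].
    - rewrite ind_true, Rmult_1_l by exact Pi. apply ind_le_sumR.
      intros [Qj Hij]. exists (S i * S j - 1)%nat. split; [lia | repeat split; auto; lia].
    - rewrite ind_false, Rmult_0_l by exact Pi.
      apply sumR_nonneg. intros; apply ind_nonneg. }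
  rewrite (sumR_ext _ (fun i => sumR (fun l => sumR (fun j => F i j l) N) N))
    by (intros; apply sumR_swap).
  rewrite sumR_swap, count_upto_sumR, <- sumR_scal.
  apply sumR_le. intros l _. now apply factorizations_le.
Qed.

Lemma count_quotient_lower Q C g : 0 <= C -> counts_at_least Q C g ->
  exists N0 : nat, forall N p : nat, (N0 <= N)%nat -> (2 <= p)%nat -> (p * p <= N)%nat ->
    C / (2 * Kpow g) * sqrt (INR N) * Rpower (ln (INR N)) g / sqrt (INR p)
    <= INR (count_upto Q (N / p)).
Proof.
  intros HC [N1 H]. exists (2 * N1 * N1)%nat. intros N p HN Hp2 Hpp.
  set (q := (N / p)%nat).
  assert (Hdiv := Nat.div_mod N p ltac:(lia)). assert (Hmod := Nat.mod_upper_bound N p ltac:(lia)).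
  fold q in Hdiv.
  assert (Hpq : (p <= q)%nat) by nia.
  assert (HqN : (q <= N)%nat) by nia.
  assert (HN2 : (N <= 2 * p * q)%nat) by nia.
  assert (HNq : (N <= 2 * (q * q))%nat) by nia.
  assert (Hq1 : (N1 <= q)%nat).
  { destruct (le_lt_dec N1 q) as [h|h]; [exact h|].
    assert (q * q < N1 * N1)%nat by (apply Nat.mul_lt_mono; lia). lia. }
  assert (Hq : 2 <= INR q) by (apply (le_INR 2); lia).
  assert (Hp : 2 <= INR p) by (apply (le_INR 2); lia).
  assert (HNq4 : INR N <= INR q ^ 4).
  { replace (INR q ^ 4) with (INR (q * q * (q * q))) by (rewrite !mult_INR; ring).
    apply le_INR. assert (2 <= q * q)%nat by nia.
    assert (2 * (q * q) <= q * q * (q * q))%nat by (apply Nat.mul_le_mono_r; lia). lia. }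
  destruct (Rpower_ln_comparable g (INR N) (INR q) ltac:(lra) ltac:(apply le_INR; lia) HNq4)
    as [Hln _].
  assert (HsN : sqrt (INR N) <= 2 * sqrt (INR p) * sqrt (INR q)).
  { rewrite <- (sqrt_square 2), <- !sqrt_mult by lra. apply sqrt_le_1_alt.
    replace (2 * 2 * INR p * INR q) with (2 * INR (2 * p * q)) by (rewrite !mult_INR; simpl; ring).
    assert (INR N <= INR (2 * p * q)) by (apply le_INR; lia).
    pose proof (pos_INR (2 * p * q)). lra. }
  assert (HK := Kpow_pos g).
  assert (Hsp : 0 < sqrt (INR p)) by (apply sqrt_lt_R0; lra).
  eapply Rle_trans; [|apply H; exact Hq1].
  apply Rmult_le_reg_r with (2 * Kpow g * sqrt (INR p)); [nra|].
  replace (C / (2 * Kpow g) * sqrt (INR N) * Rpower (ln (INR N)) g / sqrt (INR p)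
           * (2 * Kpow g * sqrt (INR p)))
    with (C * sqrt (INR N) * Rpower (ln (INR N)) g) by (field; lra).
  replace (C * sqrt (INR q) * Rpower (ln (INR q)) g * (2 * Kpow g * sqrt (INR p)))
    with (C * (2 * sqrt (INR p) * sqrt (INR q)) * (Kpow g * Rpower (ln (INR q)) g)) by ring.
  apply Rmult_le_compat; [| left; apply exp_pos | | exact Hln].
  - apply Rmult_le_pos; [lra | apply sqrt_pos].
  - apply Rmult_le_compat_l; [lra | exact HsN].
Qed.

Lemma sum_count_quotients_ge P Q A N Z : (forall p, P p -> is_prime_nat p) ->
  (Z * Z <= N)%nat ->
  (forall p, (2 <= p)%nat -> (p * p <= N)%nat -> A / sqrt (INR p) <= INR (count_upto Q (N / p))) ->
  A * sum_inv_sqrt P Z <= sumR (fun i => ind (P (S i)) * INR (count_upto Q (N / S i))) N.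
Proof.
  intros HP HZ HQ.
  apply Rle_trans with (sumR (fun i => ind (P (S i)) * INR (count_upto Q (N / S i))) Z).
  - unfold sum_inv_sqrt. rewrite <- sumR_scal. apply sumR_le. intros i Hi.
    destruct (excluded_middle_informative (P (S i))) as [Pi|Pi].
    + rewrite ind_true, Rmult_1_l by exact Pi.
      replace (A * (1 / sqrt (INR (S i)))) with (A / sqrt (INR (S i))) by (unfold Rdiv; ring).
      apply HQ; [now apply is_prime_nat_ge2, HP | nia].
    + rewrite ind_false, Rmult_0_l by exact Pi. unfold Rdiv. lra.
  - apply sumR_le_range; [|nia].
    intros; apply Rmult_le_pos; [apply ind_nonneg | apply pos_INR].
Qed.

Lemma counts_at_least_mul P Q k C1 g1 C2 g2 : 0 <= C1 -> 0 <= C2 ->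
  (forall p, P p -> is_prime_nat p) -> (forall m, Q m -> prime_product k m) ->
  counts_at_least P C1 g1 -> counts_at_least Q C2 g2 ->
  counts_at_least (setmul P Q)
    (C1 * C2 / (16 * INR (S k) * Kpow g1 * Kpow g2 * Kpow (g1 + 1))) (g1 + 1 + g2).
Proof.
  intros HC1 HC2 HP HQ HPc HQc.
  destruct (sum_inv_sqrt_lower P C1 g1 HC1 HPc) as [M0 HM0].
  destruct (count_quotient_lower Q C2 g2 HC2 HQc) as [N1 HN1].
  exists (N1 + (M0 + 2) * (M0 + 2))%nat. intros N HN.
  set (Z := Nat.sqrt N).
  assert (HZ1 : (Z * Z <= N)%nat) by (apply Nat.sqrt_le_square; lia).
  assert (HZ2 : (N < S Z * S Z)%nat) by (apply Nat.sqrt_lt_square; lia).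
  assert (HZ0 : (M0 + 2 <= Z)%nat) by (apply Nat.sqrt_le_square; nia).
  assert (HK1 := Kpow_pos g1). assert (HK2 := Kpow_pos g2). assert (HK3 := Kpow_pos (g1 + 1)).
  assert (Hk : 0 < INR (S k)) by (apply lt_0_INR; lia).
  set (A := C2 / (2 * Kpow g2) * sqrt (INR N) * Rpower (ln (INR N)) g2).
  assert (HA : 0 <= A).
  { apply Rmult_le_pos; [apply Rmult_le_pos; [|apply sqrt_pos] | left; apply exp_pos].
    apply Rmult_le_pos; [lra | left; apply Rinv_0_lt_compat; lra]. }
  assert (Hquot := sum_count_quotients_ge P Q A N Z HP HZ1
                     (fun p Hp Hpp => HN1 N p ltac:(lia) Hp Hpp)).
  assert (HZ : 2 <= INR Z) by (apply (le_INR 2); lia).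
  assert (HN4 : INR N <= INR Z ^ 4).
  { replace (INR Z ^ 4) with (INR (Z * Z * (Z * Z))) by (rewrite !mult_INR; ring).
    apply le_INR. assert (S Z <= Z * Z)%nat by nia.
    assert (S Z * S Z <= Z * Z * (Z * Z))%nat by (apply Nat.mul_le_mono; lia). lia. }
  destruct (Rpower_ln_comparable (g1 + 1) (INR N) (INR Z) ltac:(lra) ltac:(apply le_INR; nia) HN4)
    as [Hln _].
  rewrite Rpower_plus.
  apply Rmult_le_reg_l with (INR (S k)); [exact Hk|].
  eapply Rle_trans; [|apply (sum_count_quotients_le P Q k N HP HQ)].
  eapply Rle_trans; [|exact Hquot].
  apply Rle_trans with (A * (C1 / (8 * Kpow g1) * Rpower (ln (INR Z)) (g1 + 1))).
  2: { apply Rmult_le_compat_l; [exact HA | exact (HM0 Z ltac:(lia))]. }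
  apply Rle_trans with
    (A * (C1 / (8 * Kpow g1) * (Rpower (ln (INR N)) (g1 + 1) / Kpow (g1 + 1)))).
  - apply Req_le. unfold A. field. lra.
  - apply Rmult_le_compat_l; [exact HA|].
    apply Rmult_le_compat_l; [apply Rmult_le_pos; [lra | left; apply Rinv_0_lt_compat; lra]|].
    apply Rmult_le_reg_r with (Kpow (g1 + 1)); [exact HK3|].
    replace (Rpower (ln (INR N)) (g1 + 1) / Kpow (g1 + 1) * Kpow (g1 + 1))
      with (Rpower (ln (INR N)) (g1 + 1)) by (field; lra).
    rewrite Rmult_comm. exact Hln.
Qed.

Lemma counts_at_least_setpow C g : 0 < C -> forall k, exists Ck, 0 < Ck /\
  forall P, (forall p, P p -> is_prime_nat p) -> counts_at_least P C g ->
    counts_at_least (setpow P (S k)) Ck (INR (S k) * g + INR k).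
Proof.
  intros HC. induction k as [|k [Ck [HCk IH]]].
  - exists C. split; [exact HC|]. intros P _ HPc.
    replace (INR 1 * g + INR 0) with g by (simpl; ring). exact HPc.
  - exists (C * Ck / (16 * INR (S (S k)) * Kpow g * Kpow (INR (S k) * g + INR k) * Kpow (g + 1))).
    split.
    { assert (HK1 := Kpow_pos g). assert (HK2 := Kpow_pos (INR (S k) * g + INR k)).
      assert (HK3 := Kpow_pos (g + 1)). assert (0 < INR (S (S k))) by (apply lt_0_INR; lia).
      apply Rdiv_lt_0_compat; [nra|]. repeat apply Rmult_lt_0_compat; lra. }
    intros P HP HPc.
    replace (INR (S (S k)) * g + INR (S k)) with (g + 1 + (INR (S k) * g + INR k))
      by (rewrite (S_INR (S k)), (S_INR k); ring).
    apply counts_at_least_mul; [lra | lra | exact HP | | exact HPc | exact (IH P HP HPc)].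
    now apply setpow_prime_product.
Qed.

Theorem corollary2p5 (alpha c : R) (k : nat) :
  alpha < 1 -> 0 < c -> (2 <= k)%nat ->
  exists c1 : R, 0 < c1 /\
    forall P1 : nat -> Prop,
      (forall p, P1 p -> is_prime_nat p) ->
      (exists X0 : R, forall X : R, X0 <= X ->
         INR (counting P1 X) >= c * sqrt X / Rpower (ln X) alpha) ->
      exists X0 : R, forall X : R, X0 <= X ->
         INR (counting (setpow P1 k) X)
           >= c1 * sqrt X * Rpower (ln X) (INR k - 1 - INR k * alpha).
Proof.
  intros _ Hc Hk. destruct k as [|k]; [lia|].
  destruct (counts_at_least_setpow c (- alpha) Hc k) as [Ck [HCk Hpow]].
  set (e := INR (S k) * - alpha + INR k).
  exists (Ck / (2 * Kpow e)). split.
  { assert (HK := Kpow_pos e). apply Rdiv_lt_0_compat; lra. }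
  intros P1 HP1 [X0 HX0].
  replace (INR (S k) - 1 - INR (S k) * alpha) with e by (unfold e; rewrite S_INR; ring).
  apply counting_of_counts_at_least; [lra|]. apply Hpow; [exact HP1|].
  apply counts_at_least_of_counting. exists X0. intros X HX.
  rewrite Rpower_Ropp. exact (HX0 X HX).
Qed.
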